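(* Let $H=\langle a,b \mid c=[b,a],\ [c,a]=[c,b]=1\rangle$, in which every element is uniquely of the form $a^mb^nc^k$ with $m,n,k\in\mathbb{Z}$. The function $\phi\colon H\to\mathbb{R}$ defined by $\phi(a^mb^nc^k)=mn-2k$ satisfies $\phi(1)=0$ and $\phi(xy)+\phi(xy^{-1})=2\phi(x)$ for all $x,y\in H$, i.e. $\phi\in J_0(H)$.
   Context: $[x,y]=x^{-1}y^{-1}xy$. $J_0(H)$ denotes the space of functions $f\colon H\to\mathbb{R}$ with $f(xy)+f(xy^{-1})=2f(x)$ for all $x,y\in H$ and $f(1)=0$. *)

From Stdlib Require Import ZArith Reals.

(* Every element is uniquely a^m b^n c^k; we
   represent a^m b^n c^k by the triple (m, n, k).  From c = b^-1 a^-1 b a we get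
   b a = a b c, hence b^n a^m' = a^m' b^n c^(n m'), which gives the product below. *)
Record Heis := mkH { hm : Z; hn : Z; hk : Z }.

Definition hone : Heis := mkH 0 0 0.

Definition hmul (x y : Heis) : Heis :=
  mkH (hm x + hm y) (hn x + hn y) (hk x + hk y + hn x * hm y).

Definition hinv (x : Heis) : Heis :=
  mkH (- hm x) (- hn x) (hm x * hn x - hk x).

Definition ha : Heis := mkH 1 0 0.
Definition hb : Heis := mkH 0 1 0.
Definition hc : Heis := mkH 0 0 1.

Definition hcomm (x y : Heis) : Heis := hmul (hmul (hmul (hinv x) (hinv y)) x) y.

Definition hpow_nat (x : Heis) (n : nat) : Heis := Nat.iter n (hmul x) hone.
Definition hpow (x : Heis) (z : Z) : Heis :=
  match z with
  | Z0 => hone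
  | Zpos p => hpow_nat x (Pos.to_nat p)
  | Zneg p => hpow_nat (hinv x) (Pos.to_nat p)
  end.

Definition J0 (f : Heis -> R) : Prop :=
  f hone = 0%R /\
  forall x y : Heis, (f (hmul x y) + f (hmul x (hinv y)) = 2 * f x)%R.

From Stdlib Require Import ZArith Reals Lia.

(* For y = (p, q, r), both phi(x y) - phi(x) and phi(x y^-1) - phi(x) equal
   +-(m q - n p + p q - 2 r): the cross term n p of the product law flips sign
   with y, and the k-coordinate p q - r of y^-1 compensates the square term p q. *)

Open Scope Z_scope.

(* In general the k-coordinate of the j-th power also gets C(j,2) m n; the
   hypothesis [m * n = 0], which holds for a, b and c, removes that term. *)
Lemma hpow_nat_mkH (m n k : Z) (j : nat) :
  m * n = 0 ->
  hpow_nat (mkH m n k) j = mkH (Z.of_nat j * m) (Z.of_nat j * n) (Z.of_nat j * k).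
Proof.
  intros Hmn; induction j as [|j IH]; [reflexivity|].
  change (hpow_nat (mkH m n k) (S j)) with (hmul (mkH m n k) (hpow_nat (mkH m n k) j)).
  rewrite IH; unfold hmul; cbn [hm hn hk]; rewrite Nat2Z.inj_succ.
  f_equal; nia.
Qed.

Lemma hinv_mkH (m n k : Z) : m * n = 0 -> hinv (mkH m n k) = mkH (- m) (- n) (- k).
Proof. intros Hmn; unfold hinv; cbn [hm hn hk]; f_equal; lia. Qed.

Lemma hpow_mkH (m n k z : Z) :
  m * n = 0 -> hpow (mkH m n k) z = mkH (z * m) (z * n) (z * k).
Proof.
  intros Hmn; destruct z as [|p|p]; cbn [hpow].
  - reflexivity.
  - rewrite hpow_nat_mkH, positive_nat_Z by exact Hmn; reflexivity.
  - rewrite hinv_mkH, hpow_nat_mkH, positive_nat_Z by (exact Hmn || nia).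
    rewrite <- Pos2Z.opp_pos; f_equal; ring.
Qed.

Lemma hmul_normal_form (m n k : Z) :
  hmul (hmul (hpow ha m) (hpow hb n)) (hpow hc k) = mkH m n k.
Proof.
  unfold ha, hb, hc; rewrite !hpow_mkH by reflexivity.
  unfold hmul; cbn [hm hn hk]; f_equal; ring.
Qed.

Definition hquad (x : Heis) : Z := hm x * hn x - 2 * hk x.

Lemma hquad_hone : hquad hone = 0.
Proof. reflexivity. Qed.

Lemma hquad_mul_add_mul_inv (x y : Heis) :
  hquad (hmul x y) + hquad (hmul x (hinv y)) = 2 * hquad x.
Proof.
  destruct x as [m n k], y as [p q r].
  unfold hquad, hmul, hinv; cbn [hm hn hk]; ring.
Qed.

Theorem lemma3p9 (phi : Heis -> R)
  (hphi : forall m n k : Z,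
      phi (hmul (hmul (hpow ha m) (hpow hb n)) (hpow hc k)) = IZR (m * n - 2 * k)) :
  J0 phi.
Proof.
  assert (Hphi : forall x, phi x = IZR (hquad x)).
  { intros [m n k]; change (hquad (mkH m n k)) with (m * n - 2 * k).
    rewrite <- hphi, hmul_normal_form; reflexivity. }
  split.
  - rewrite Hphi, hquad_hone; reflexivity.
  - intros x y; rewrite !Hphi, <- plus_IZR, hquad_mul_add_mul_inv, mult_IZR; reflexivity.
Qed.
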